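(* Let $V\subset\mathbb{R}^d$ be a finite set of points, let $\varepsilon>0$, $c>1$ and let $k\ge 1$ be an integer. Let $S$ be a set of edges (unordered pairs of distinct points of $V$), partitioned as $S=S_0\cup S_1\cup\dots\cup S_{k-1}$, where $S_i$ is the set of edges of $S$ of index $i$. Suppose that Invariant 1 holds for every $S_i$, $0\le i\le k-1$. Then $S$, viewed as a graph on $V$ in which each edge $\{x,y\}$ has weight $\lVert xy\rVert$, is a $(1+\varepsilon)$-spanner of $V$: for all $u,v\in V$, the shortest-path distance $d_S(u,v)$ in $S$ satisfies $d_S(u,v)\le(1+\varepsilon)\lVert uv\rVert$.
   Context: $\lVert xy\rVert$ denotes the Euclidean distance between $x,y\in\mathbb{R}^d$. For distinct $u,v$, the index of the pair is $\operatorname{index}(u,v)=\lfloor \log_c\lVert uv\rVert\rfloor \bmod k$; the index of an edge is the index of its endpoint pair. Invariant 1 for $S_i$: for every pair $\{u,v\}$ of distinct points of $V$ with $\operatorname{index}(u,v)=i$ and $\{u,v\}\notin S_i$, there exist $l\ge 1$ and edges $\{x_1,y_1\},\dots,\{x_l,y_l\}\in S_i$ (each written with some ordering of its endpoints) such that $$\sum_{m=1}^l \lVert x_my_m\rVert+(1+\varepsilon)\Big(\lVert ux_1\rVert+\sum_{m=1}^{l-1}\lVert y_mx_{m+1}\rVert+\lVert y_lv\rVert\Big)<(1+\varepsilon)\lVert uv\rVert .$$ *)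

From HB Require Import structures.
From mathcomp Require Import all_boot all_order all_algebra.
From mathcomp Require Import finmap.
From mathcomp Require Import all_classical all_reals all_analysis.
Set Implicit Arguments. Unset Strict Implicit. Unset Printing Implicit Defensive.
Import Order.TTheory GRing.Theory Num.Theory.
Local Open Scope classical_set_scope.
Local Open Scope fset_scope.
Local Open Scope ring_scope.

Section Spanner.
Variables (R : realType) (d : nat).
Notation pt := 'rV[R]_d.

Definition eucl_dist (x y : pt) : R := Num.sqrt (\sum_(i < d) (x ord0 i - y ord0 i) ^+ 2).

Definition pindex (c : R) (k : nat) (u v : pt) : int :=
  (Num.floor (ln (eucl_dist u v) / ln c) %% (k%:Z))%Z.

(* an edge is an unordered pair, encoded as a 2-element finite set *)
Definition edge (x y : pt) : {fset pt} := [fset x; y].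

Definition Sidx (c : R) (k : nat) (S : set {fset pt}) (i : nat) : set {fset pt} :=
  [set e | S e /\ exists x y, e = edge x y /\ x != y /\ pindex c k x y = i%:Z].

(* ||u x_1|| + sum_{m<l} ||y_m x_{m+1}|| + ||y_l v|| for ps = [(x_1,y_1);...;(x_l,y_l)] *)
Fixpoint gaps (u : pt) (ps : seq (pt * pt)) (v : pt) : R :=
  match ps with
  | [::] => eucl_dist u v
  | p :: ps' => eucl_dist u p.1 + gaps p.2 ps' v
  end.

Definition invariant1 (V : set pt) (eps c : R) (k : nat) (S : set {fset pt}) (i : nat) : Prop :=
  forall u v, V u -> V v -> u != v -> pindex c k u v = i%:Z ->
    ~ Sidx c k S i (edge u v) ->
    exists ps : seq (pt * pt),
      (1 <= size ps)%N /\
      (forall p, p \in ps -> Sidx c k S i (edge p.1 p.2)) /\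
      \sum_(p <- ps) eucl_dist p.1 p.2 + (1 + eps) * gaps u ps v < (1 + eps) * eucl_dist u v.

Fixpoint is_walk (S : set {fset pt}) (u : pt) (s : seq pt) (v : pt) : Prop :=
  match s with
  | [::] => u = v
  | x :: s' => S (edge u x) /\ is_walk S x s' v
  end.

Fixpoint walk_len (u : pt) (s : seq pt) : R :=
  match s with
  | [::] => 0
  | x :: s' => eucl_dist u x + walk_len x s'
  end.

(* shortest-path distance d_S(u,v) (+oo if no path) *)
Definition sdist (S : set {fset pt}) (u v : pt) : \bar R :=
  ereal_inf [set (walk_len u s)%:E | s in [set s | is_walk S u s v]].

End Spanner.

From HB Require Import structures.
From mathcomp Require Import all_boot all_order all_algebra.
From mathcomp Require Import finmap.
From mathcomp Require Import all_classical all_reals all_analysis.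
From mathcomp Require Import lra zify.
Import Order.TTheory GRing.Theory Num.Theory.
Local Open Scope classical_set_scope.
Local Open Scope ring_scope.

(* Induction on ||uv|| over the finitely many pairs of V.  If
   {u,v} is not itself an edge, Invariant 1 for its index gives edges
   {x_m,y_m} whose gaps ||ux_1||, ||y_m x_(m+1)||, ||y_l v|| are all shorter
   than ||uv||; by induction each gap is bridged by a walk of length at most
   (1+eps) times the gap, and following these walks and the edges alternately
   gives a walk of length below (1+eps)||uv||. *)

Lemma count_ltn_sub (T : eqType) (a b : pred T) (s : seq T) (x : T) :
  subpred a b -> x \in s -> b x -> ~~ a x -> (count a s < count b s)%N.
Proof.
move=> sub_ab; elim: s => [//|y s IHs].
rewrite in_cons => /orP[/eqP <- bx nax|xs bx nax] /=.
  by rewrite bx (negbTE nax) add0n ltnS; apply: sub_count.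
have := IHs xs bx nax.
by case ay: (a y); [rewrite (sub_ab _ ay) | case: (b y)] => /=; lia.
Qed.

Lemma finite_lt_ind (T : eqType) (disp : Order.disp_t) (U : porderType disp)
    (f : T -> U) (s : seq T) (P : T -> Prop) :
  (forall x, x \in s -> (forall y, y \in s -> (f y < f x)%O -> P y) -> P x) ->
  forall x, x \in s -> P x.
Proof.
move=> IH x; have [n] := ubnP (count (fun y => f y < f x)%O s).
elim: n x => [//|n IHn] x ltn xs; apply: IH => // y ys fyx.
apply: IHn => //; rewrite -ltnS; apply: leq_trans ltn; rewrite ltnS.
apply: (@count_ltn_sub _ (fun z => f z < f y)%O _ _ y) => //= [z fzy|].
  exact: lt_trans fzy fyx.
by rewrite ltxx.
Qed.

Lemma pindex_nat {R : realType} {d : nat} (c : R) {k : nat} (u v : 'rV[R]_d) :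
  (0 < k)%N -> exists2 i, (i < k)%N & pindex c k u v = i%:Z.
Proof.
move=> k0; have z0 : 0 <= pindex c k u v by apply: modz_ge0; rewrite eqz_nat; lia.
exists `|pindex c k u v|%N; last by rewrite abszE ger0_norm.
by rewrite -ltz_nat abszE ger0_norm //; apply: ltz_pmod; rewrite ltz_nat.
Qed.

Section Walks.
Variables (R : realType) (d : nat) (S : set {fset 'rV[R]_d}).
Notation pt := 'rV[R]_d.

Lemma eucl_dist_ge0 (x y : pt) : 0 <= eucl_dist x y.
Proof. exact: sqrtr_ge0. Qed.

Lemma gaps_ge0 (u : pt) (ps : seq (pt * pt)) (v : pt) : 0 <= gaps u ps v.
Proof.
elim: ps u => [|p ps IHps] u /=; first exact: eucl_dist_ge0.
by rewrite addr_ge0 ?eucl_dist_ge0.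
Qed.

Definition walk_le (u v : pt) (L : R) : Prop :=
  exists2 s, is_walk S u s v & walk_len u s <= L.

Lemma walk_le_refl (u : pt) (L : R) : 0 <= L -> walk_le u u L.
Proof. by exists [::]. Qed.

Lemma walk_le_edge [u v : pt] : S (edge u v) -> walk_le u v (eucl_dist u v).
Proof. by exists [:: v] => //=; rewrite addr0. Qed.

Lemma walk_le_trans [u w v : pt] [L1 L2 L : R] :
  walk_le u w L1 -> walk_le w v L2 -> L1 + L2 <= L -> walk_le u v L.
Proof.
move=> [s1 W1 len1] [s2 W2 len2] le_L; exists (s1 ++ s2).
  by elim: s1 u W1 {len1} => [|x s1 IHs1] u /=; [move->| case=> ? /IHs1].
suff -> : walk_len u (s1 ++ s2) = walk_len u s1 + walk_len w s2 by lra.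
elim: s1 u W1 {len1} => [|x s1 IHs1] u /=; first by move->; rewrite add0r.
by case=> _ /IHs1 ->; rewrite addrA.
Qed.

Lemma sdist_le_walk (u v : pt) (L : R) : walk_le u v L -> (sdist S u v <= L%:E)%E.
Proof.
move=> [s W len_s]; apply: ge_ereal_inf; exists (walk_len u s)%:E; first by exists s.
by rewrite lee_fin.
Qed.

Lemma walk_le_gaps (V : set pt) (t M : R) :
    (forall a b, V a -> V b -> eucl_dist a b < M -> walk_le a b (t * eucl_dist a b)) ->
  forall ps u v, V u -> V v ->
    (forall p, p \in ps -> [/\ S (edge p.1 p.2), V p.1 & V p.2]) ->
    gaps u ps v < M ->
  walk_le u v (\sum_(p <- ps) eucl_dist p.1 p.2 + t * gaps u ps v).
Proof.
move=> bridge; elim=> [|p ps IHps] u v Vu Vv ps_edges /= gaps_lt.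
  by rewrite big_nil add0r; apply: bridge.
have [Sp Vp1 Vp2] := ps_edges p (mem_head _ _).
have := gaps_ge0 p.2 ps v; have := eucl_dist_ge0 u p.1 => ge0_up ge0_rest.
have walk_first : walk_le u p.1 (t * eucl_dist u p.1) by apply: bridge => //; lra.
have walk_rest : walk_le p.2 v (\sum_(q <- ps) eucl_dist q.1 q.2 + t * gaps p.2 ps v).
  apply: IHps => //; last lra.
  by move=> q qps; apply: ps_edges; rewrite in_cons qps orbT.
apply: walk_le_trans walk_first (walk_le_trans (walk_le_edge Sp) walk_rest (lexx _)) _.
by rewrite big_cons mulrDr; lra.
Qed.

End Walks.
Arguments walk_le {R d} S u v L.
Arguments eucl_dist_ge0 {R d}.
Arguments walk_le_refl {R d S} u [L].
Arguments walk_le_edge {R d S} [u v].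
Arguments walk_le_trans {R d S} [u w v L1 L2 L].
Arguments sdist_le_walk {R d S u v L}.
Arguments walk_le_gaps {R d S V t M}.

Section Spanner.
Variables (R : realType) (d : nat) (V : set 'rV[R]_d) (eps c : R) (k : nat).
Variable S : set {fset 'rV[R]_d}.
Hypothesis eps_gt0 : 0 < eps.
Hypothesis k_gt0 : (0 < k)%N.
Hypothesis S_on_V : forall e, S e -> exists x y, V x /\ V y /\ x != y /\ e = edge x y.
Hypothesis inv : forall i, (i < k)%N -> invariant1 V eps c k S i.

Lemma edge_endpoints [x y : 'rV[R]_d] : S (edge x y) -> V x /\ V y.
Proof.
move=> /S_on_V [a [b [Va [Vb [_ xy_ab]]]]].
by split; [have : x \in edge x y by exact: fset21 | have : y \in edge x y by exact: fset22];
  rewrite xy_ab => /fset2P[]->.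
Qed.

Lemma spanner_step (u v : 'rV[R]_d) : V u -> V v ->
    (forall a b, V a -> V b -> eucl_dist a b < eucl_dist u v ->
       walk_le S a b ((1 + eps) * eucl_dist a b)) ->
  walk_le S u v ((1 + eps) * eucl_dist u v).
Proof.
move=> Vu Vv IH; have ge0_uv := eucl_dist_ge0 u v.
have [<-|uv] := eqVneq u v.
  by apply: walk_le_refl; rewrite mulr_ge0 ?eucl_dist_ge0 // addr_ge0 // ltW.
have [i ik idx_uv] := pindex_nat c u v k_gt0.
have [[Suv _]|not_Suv] := pselect (Sidx c k S i (edge u v)).
  apply: (walk_le_trans (walk_le_edge Suv) (walk_le_refl v (lexx 0))).
  by rewrite addr0 mulrDl mul1r lerDl mulr_ge0 // ltW.
have [ps [_ [ps_Si ps_short]]] := inv _ ik _ _ Vu Vv uv idx_uv not_Suv.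
have ge0_sum : 0 <= \sum_(p <- ps) eucl_dist p.1 p.2.
  by apply: sumr_ge0 => p _; exact: eucl_dist_ge0.
have gaps_lt : gaps u ps v < eucl_dist u v.
  by rewrite -(ltr_pM2l (_ : 0 < 1 + eps)) ?addr_gt0 //; lra.
have ps_edges p : p \in ps -> [/\ S (edge p.1 p.2), V p.1 & V p.2].
  by move=> /ps_Si [Sp _]; have [] := edge_endpoints Sp; split.
have [s W len_s] := walk_le_gaps IH _ _ _ Vu Vv ps_edges gaps_lt.
by exists s => //; lra.
Qed.

End Spanner.
Arguments spanner_step {R d V eps c k S}.

Theorem lemma1 (R : realType) (d : nat) (V : set 'rV[R]_d) (eps c : R) (k : nat)
  (S : set {fset 'rV[R]_d}) :
  finite_set V -> 0 < eps -> 1 < c -> (1 <= k)%N ->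
  (forall e, S e -> exists x y, V x /\ V y /\ x != y /\ e = edge x y) ->
  (forall i, (i < k)%N -> invariant1 V eps c k S i) ->
  forall u v, V u -> V v -> (sdist S u v <= ((1 + eps) * eucl_dist u v)%:E)%E.
Proof.
move=> /finite_fsetP[B VB] eps_gt0 _ k_gt0 S_on_V inv u v Vu Vv.
pose pairs := [seq (a, b) | a <- B, b <- B].
have in_pairs a b : V a -> V b -> (a, b) \in pairs.
  by rewrite !VB => aB bB; apply/allpairsP; exists (a, b).
apply: sdist_le_walk.
pose dist_pair (ab : 'rV[R]_d * 'rV[R]_d) := eucl_dist ab.1 ab.2.
pose P (ab : 'rV[R]_d * 'rV[R]_d) := walk_le S ab.1 ab.2 ((1 + eps) * dist_pair ab).
apply: (@finite_lt_ind _ _ _ dist_pair pairs P _ (u, v) (in_pairs _ _ Vu Vv)).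
move=> _ /allpairsP[[a b] [aB bB ->]] IH.
have [Va Vb] : V a /\ V b by rewrite VB.
rewrite /P /dist_pair /=.
apply: (spanner_step eps_gt0 k_gt0 S_on_V inv _ _ Va Vb) => x y Vx Vy xy_lt.
exact: IH (in_pairs _ _ Vx Vy) xy_lt.
Qed.
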